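(* Let $n\ge 4$, distances $d_{ij}>0$, $e_{ij}=\tan^{-1}(d_{ij})$, and fix $\beta$ with $\sin(\pi\beta)\neq 0$. Fix a state $(s,d,e,t)$ and two distinct unexplored nodes $a,b\neq t$, and let $\gamma^\#>0$ satisfy $\cos(\gamma^\# e_{ab})=0$. For $c\in\{a,b\}$ define $$g_c(\gamma)=d_{tc}\sin(\pi\beta)\sin(\gamma e_{tc})\prod_{k\in\{1,\dots,n\}\setminus\{t,a,b\}}\cos(\gamma e_{ck}),$$ so that $Q((s,d,e,t),c;(\gamma,\beta))=\cos(\gamma e_{ab})\,g_c(\gamma)$. Assume $g_a(\gamma^\#)\neq g_b(\gamma^\#)$. Then there exists $\delta>0$ such that for every $\varepsilon\in(0,\delta)$: (i) the relative order of the Q-values of $a$ and $b$ inverts across $\gamma^\#$: $\operatorname{sign}\big(Q(\cdot,a;(\gamma^\#-\varepsilon,\beta))-Q(\cdot,b;(\gamma^\#-\varepsilon,\beta))\big)=-\operatorname{sign}\big(Q(\cdot,a;(\gamma^\#+\varepsilon,\beta))-Q(\cdot,b;(\gamma^\#+\varepsilon,\beta))\big)\neq 0$; (ii) if $a$ (resp. $b$) is a maximizer of the Q-values over unexplored nodes at $\gamma^\#-\varepsilon$ (or at $\gamma^\#+\varepsilon$), then it is not a maximizer at the other parameter value $\gamma^\#\pm\varepsilon$; in particular the greedy policy is policy critical at $\gamma^\#$, i.e. $\pi((s,d,e,t);(\gamma^\#-\varepsilon,\beta))\neq\pi((s,d,e,t);(\gamma^\#+\varepsilon,\beta))$.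
   Context: TSP instance: $n$ nodes, $d_{ij}=d_{ji}>0$ is the Euclidean distance between nodes $i\neq j$, and scaled edge weights $e_{ij}=\tan^{-1}(d_{ij})$. A state is a tuple $(s,d,e,t)$ with $s\in\{0,\pi\}^n$, $s_i=\pi$ iff node $i$ is unvisited, and $t$ the current node. The depth-1 EQC Q-value for moving to unexplored $a\neq t$ is $Q((s,d,e,t),a;(\gamma,\beta)) = d_{ta}\sin(\pi\beta)\sin(\gamma e_{ta})\prod_{k\in\{1,\dots,n\}\setminus\{t,a\}}\cos(\gamma e_{ak})$, and the greedy policy $\pi((s,d,e,t);(\gamma,\beta))$ is a maximizer of this Q-value over unexplored nodes. The policy is called critical at $\gamma_0$ (for a given $\delta>0$) if $\pi((s,d,e,t);(\gamma_0-\delta,\beta))\neq\pi((s,d,e,t);(\gamma_0+\delta,\beta))$. *)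

From Stdlib Require Import Reals.
From mathcomp Require Import all_boot all_order all_algebra.
From mathcomp Require Import Rstruct.
Set Implicit Arguments. Unset Strict Implicit. Unset Printing Implicit Defensive.
Import Order.TTheory GRing.Theory Num.Theory.
Local Open Scope ring_scope.

Definition scaled_weights (n : nat) (d : 'I_n -> 'I_n -> R) : 'I_n -> 'I_n -> R :=
  fun i j => atan (d i j).

(* A state (s,d,e,t): s i \in {0, PI}, node i unvisited iff s i = PI. *)
Definition unexplored (n : nat) (s : 'I_n -> R) (i : 'I_n) : Prop := s i = PI.

Definition Qval (n : nat) (s : 'I_n -> R) (d e : 'I_n -> 'I_n -> R) (t a : 'I_n)
  (gamma beta : R) : R :=
  d t a * sin (PI * beta) * sin (gamma * e t a) *
  \prod_(k < n | (k != t) && (k != a)) cos (gamma * e a k).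

Definition gfun (n : nat) (d e : 'I_n -> 'I_n -> R) (t a b c : 'I_n)
  (gamma beta : R) : R :=
  d t c * sin (PI * beta) * sin (gamma * e t c) *
  \prod_(k < n | [&& k != t, k != a & k != b]) cos (gamma * e c k).

Definition is_maximizer (n : nat) (s : 'I_n -> R) (d e : 'I_n -> 'I_n -> R)
  (t a : 'I_n) (gamma beta : R) : Prop :=
  unexplored s a /\ a <> t /\
  forall a' : 'I_n, unexplored s a' -> a' <> t ->
    Qval s d e t a' gamma beta <= Qval s d e t a gamma beta.

Definition greedy_policy (n : nat) (s : 'I_n -> R) (d e : 'I_n -> 'I_n -> R)
  (t : 'I_n) (beta : R) (pol : R -> 'I_n) : Prop :=
  forall gamma, is_maximizer s d e t (pol gamma) gamma beta.

(** Write [w = e a b].  Since [cos (γ w)] is a common factor of both Q-values,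
    [Q a γ - Q b γ = cos (γ w) (g_a γ - g_b γ)].  The second factor is
    continuous and nonzero at [γ#], so it keeps its sign near [γ#], while
    [cos ((γ# - ε) w) cos ((γ# + ε) w) = cos² (γ# w) - sin² (ε w) = - sin² (ε w) < 0]
    for small [ε > 0].  Hence the difference of Q-values changes sign strictly
    across [γ#], and the node among [a], [b] that wins on one side loses on
    the other. *)
From Stdlib Require Import Reals.
From mathcomp Require Import all_boot all_order all_algebra.
From mathcomp Require Import Rstruct ring lra.
Set Implicit Arguments. Unset Strict Implicit. Unset Printing Implicit Defensive.
Import Order.TTheory GRing.Theory Num.Theory.
Local Open Scope ring_scope.

Lemma continuity_pt_prod (I : Type) (r : seq I) (P : pred I) (F : I -> R -> R) x :
  (forall k, continuity_pt (F k) x) ->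
  continuity_pt (fun g => \prod_(k <- r | P k) F k g) x.
Proof.
move=> contF; elim: r => [|k r IHr].
  have -> : (fun g => \prod_(k <- [::] | P k) F k g) = fun=> 1.
    by apply: boolp.funext => g; rewrite big_nil.
  exact: continuity_pt_const.
have -> : (fun g => \prod_(i <- k :: r | P i) F i g) =
          fun g => if P k then F k g * \prod_(i <- r | P i) F i g
                   else \prod_(i <- r | P i) F i g.
  by apply: boolp.funext => g; rewrite big_cons.
by case: (P k) => //; apply: continuity_pt_mult.
Qed.

Lemma continuity_pt_sign (f : R -> R) x :
  continuity_pt f x -> f x != 0 ->
  exists2 del, 0 < del & forall u, `|u - x| < del -> 0 < f u * f x.
Proof.
move=> contf fx_neq0.
have /RltP/contf [del [/RltP del_gt0 near_fx]] : 0 < `|f x| by rewrite normr_gt0.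
exists del => // u.
have [-> _|u_neq_x ux_lt] := eqVneq u x; first by rewrite -expr2 exprn_even_gt0.
have : Rdist (f u) (f x) < `|f x|.
  apply/RltP/near_fx; split; first by split=> // eq_xu; rewrite eq_xu eqxx in u_neq_x.
  by rewrite /= /Rdist RabsE RminusE; apply/RltP.
rewrite /Rdist RabsE RminusE ltr_norml; move: (f u) (f x) fx_neq0 => y z z_neq0.
have [z_lt0|z_gt0|z0] := ltrgtP z 0; last by rewrite z0 eqxx in z_neq0.
- by rewrite ltr0_norm // => /andP[? ?]; nra.
- by rewrite gtr0_norm // => /andP[? ?]; nra.
Qed.

Lemma cosB_mul_cosD (x y : R) :
  cos (x - y) * cos (x + y) = cos x ^+ 2 - sin y ^+ 2.
Proof.
have := cos_minus x y; have := cos_plus x y.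
have := sin2_cos2 x; have := sin2_cos2 y; rewrite /Rsqr !RealsE => ? ? -> ->.
rewrite !expr2; nra.
Qed.

Lemma sg_opp_of_mul_lt0 (x y : R) :
  x * y < 0 -> Num.sg x = - Num.sg y /\ Num.sg y != 0.
Proof.
move=> xy_lt0.
have [x_lt0|x_gt0|x0] := ltrgtP x 0; have [y_lt0|y_gt0|y0] := ltrgtP y 0;
  rewrite ?(ltr0_sg x_lt0) ?(gtr0_sg x_gt0) ?(ltr0_sg y_lt0) ?(gtr0_sg y_gt0);
  try (split; by rewrite ?opprK); nra.
Qed.

Lemma atan_gt0_lt_PI (x : R) : 0 < x -> 0 < atan x < PI.
Proof.
move=> /RltP/atan_increasing; rewrite atan_0 => /RltP ->.
have [_ lt_PI2] := atan_bound x.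
by apply/RltP; exact: Rlt_trans lt_PI2 PI2_Rlt_PI.
Qed.

Section TwoCandidates.

Variables (n : nat) (s : 'I_n -> R) (d e : 'I_n -> 'I_n -> R).
Variables (t a b : 'I_n) (beta : R).
Hypothesis e_sym : forall i j, e i j = e j i.
Hypotheses (a_neq_b : a != b) (a_neq_t : a != t) (b_neq_t : b != t).

Local Notation Q c gamma := (Qval s d e t c gamma beta).
Local Notation g c gamma := (gfun d e t a b c gamma beta).

Lemma Qval_left (gamma : R) : Q a gamma = cos (gamma * e a b) * g a gamma.
Proof.
rewrite /gfun /Qval (bigD1 b) /=; last by rewrite b_neq_t eq_sym a_neq_b.
rewrite (eq_bigl (fun k => [&& k != t, k != a & k != b])); first by rewrite mulrCA.
by move=> k; rewrite andbA.
Qed.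

Lemma Qval_right (gamma : R) : Q b gamma = cos (gamma * e a b) * g b gamma.
Proof.
rewrite /gfun /Qval (bigD1 a) /=; last by rewrite a_neq_t a_neq_b.
rewrite (eq_bigl (fun k => [&& k != t, k != a & k != b])); first by rewrite (e_sym b a) mulrCA.
by move=> k; case: (k != t); case: (k != a); case: (k != b).
Qed.

Lemma gfun_continuity (c : 'I_n) (gamma : R) : continuity_pt (fun x => g c x) gamma.
Proof.
rewrite /gfun; apply: continuity_pt_mult; last first.
  apply: continuity_pt_prod => k.
  by change (continuity_pt (fun x => cos (Rmult x (e c k))) gamma); reg.
change (continuity_pt
  (fun x => Rmult (d t c * sin (PI * beta)) (sin (Rmult x (e t c)))) gamma).
by reg.
Qed.

Lemma Qdiff_sign_flip (gs : R) :
  0 < e a b < PI -> cos (gs * e a b) = 0 -> g a gs != g b gs ->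
  exists2 del, 0 < del & forall eps, 0 < eps < del ->
    (Q a (gs - eps) - Q b (gs - eps)) * (Q a (gs + eps) - Q b (gs + eps)) < 0.
Proof.
move=> /andP[w_gt0 w_lt_PI] cos0 g_neq; set w := e a b.
set G := fun gamma => g a gamma - g b gamma.
have contG : continuity_pt G gs.
  exact: continuity_pt_minus (gfun_continuity a gs) (gfun_continuity b gs).
have [|del del_gt0 G_sign] := @continuity_pt_sign G gs contG; first by rewrite subr_eq0.
exists (Num.min del 1) => [|eps]; first by rewrite lt_min del_gt0 ltr01.
rewrite lt_min => /andP[eps_gt0 /andP[eps_lt_del eps_lt1]].
have G_pos : 0 < G (gs - eps) * G (gs + eps).
  have Gm := G_sign (gs - eps); have Gp := G_sign (gs + eps).
  have /Gm Gm_pos : `|gs - eps - gs| < del by rewrite addrAC subrr sub0r normrN gtr0_norm.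
  have /Gp Gp_pos : `|gs + eps - gs| < del by rewrite addrAC subrr add0r gtr0_norm.
  have : 0 < (G (gs - eps) * G gs) * (G (gs + eps) * G gs) by exact: mulr_gt0.
  by rewrite mulrACA -expr2 pmulr_lgt0 // exprn_even_gt0 // subr_eq0.
have sin_pos : 0 < sin (eps * w).
  apply/RltP/sin_gt_0; apply/RltP; first exact: mulr_gt0.
  by apply: lt_trans w_lt_PI; rewrite -[ltRHS]mul1r ltr_pM2r.
have cos_prod : cos ((gs - eps) * w) * cos ((gs + eps) * w) = - sin (eps * w) ^+ 2.
  by rewrite !RealsE mulrBl mulrDl cosB_mul_cosD cos0 expr0n sub0r.
rewrite !Qval_left !Qval_right -!mulrBr mulrACA cos_prod mulNr oppr_lt0.
by rewrite mulr_gt0 ?exprn_gt0.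
Qed.

Lemma maximizer_not_both (g1 g2 : R) (c : 'I_n) :
  unexplored s a -> unexplored s b -> (c = a \/ c = b) ->
  (Q a g1 - Q b g1) * (Q a g2 - Q b g2) < 0 ->
  ~ (is_maximizer s d e t c g1 beta /\ is_maximizer s d e t c g2 beta).
Proof.
move=> ua ub c_ab flip [[_ [_ max1]] [_ [_ max2]]].
have a_t : a <> t by apply/eqP.
have b_t : b <> t by apply/eqP.
case: c_ab => -> in max1 max2.
- by have := max1 b ub b_t; have := max2 b ub b_t; nra.
- by have := max1 a ua a_t; have := max2 a ua a_t; nra.
Qed.

End TwoCandidates.

Theorem proposition1
  (n : nat) (hn : (4 <= n)%N)
  (d : 'I_n -> 'I_n -> R)
  (hdpos : forall i j : 'I_n, i != j -> 0 < d i j)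
  (hdsym : forall i j : 'I_n, d i j = d j i)
  (beta : R) (hbeta : sin (PI * beta) != 0)
  (s : 'I_n -> R) (hs : forall i, s i = 0 \/ s i = PI)
  (t a b : 'I_n)
  (ha : unexplored s a) (hb : unexplored s b)
  (hab : a != b) (hat : a != t) (hbt : b != t)
  (gs : R) (hgs : 0 < gs)
  (hcos : cos (gs * scaled_weights d a b) = 0)
  (hg : gfun d (scaled_weights d) t a b a gs beta
        != gfun d (scaled_weights d) t a b b gs beta) :
  let e := scaled_weights d in
  let Q := fun c gamma => Qval s d e t c gamma beta in
  exists delta : R, 0 < delta /\
    forall eps : R, 0 < eps < delta ->
      (* (i) *)
      (Num.sg (Q a (gs - eps) - Q b (gs - eps))
         = - Num.sg (Q a (gs + eps) - Q b (gs + eps))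
       /\ Num.sg (Q a (gs + eps) - Q b (gs + eps)) != 0)
      (* (ii) *)
      /\ (forall c : 'I_n, (c = a \/ c = b) ->
            (is_maximizer s d e t c (gs - eps) beta ->
               ~ is_maximizer s d e t c (gs + eps) beta)
            /\ (is_maximizer s d e t c (gs + eps) beta ->
               ~ is_maximizer s d e t c (gs - eps) beta))
      /\ (forall pol : R -> 'I_n, greedy_policy s d e t beta pol ->
            (pol (gs - eps) \in [:: a; b] \/ pol (gs + eps) \in [:: a; b]) ->
            pol (gs - eps) != pol (gs + eps)).
Proof.
(* [hbeta] follows from [hg]. *)
move=> e Q.
have e_sym : forall i j, e i j = e j i by move=> i j; rewrite /e /scaled_weights hdsym.
have w_range : 0 < e a b < PI by apply/atan_gt0_lt_PI/hdpos.
have [del del_gt0 flip] := Qdiff_sign_flip s e_sym hab hat hbt w_range hcos hg.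
exists del; split=> // eps /flip flip_eps.
have not_both c : c = a \/ c = b ->
    ~ (is_maximizer s d e t c (gs - eps) beta /\ is_maximizer s d e t c (gs + eps) beta).
  by move=> c_ab; exact: (maximizer_not_both hat hbt ha hb c_ab flip_eps).
split; first exact: sg_opp_of_mul_lt0.
split=> [c /not_both|pol greedy pol_ab]; first by tauto.
apply/eqP => pol_eq; have c_ab : pol (gs - eps) = a \/ pol (gs - eps) = b.
  by case: pol_ab; rewrite ?pol_eq !inE => /orP[/eqP|/eqP]; auto.
by apply: (not_both _ c_ab); rewrite {2}pol_eq.
Qed.
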